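(* Let $p$ be a prime, $m\ge 2$, $G$ an elementary abelian $p$-group of rank $m$, $J$ the Jacobson radical of $\mathbb{F}_pG$, and $N=m(p-1)$. Then for $0<r<N$ the ideal $J^r$ is not a principal ideal of $\mathbb{F}_pG$, while $J^N=\mathbb{F}_p\sum_{g\in G}g$ is principal. Consequently, for $0\le i\le N$, the ideal $J^i$ is checkable in $\mathbb{F}_pG$ if and only if $i\in\{0,1\}$. (Equivalently, with $\mathrm{RM}_p(r,m)=J^{N-r}$ the Reed–Muller code of order $r$ and length $p^m$ over $\mathbb{F}_p$, $0\le r\le N$, the only checkable Reed–Muller codes are $\mathrm{RM}_p(N,m)=\mathbb{F}_pG$ and $\mathrm{RM}_p(N-1,m)=J$.)
   Context: A right ideal $I$ of a group algebra $KG$ is called checkable if there is $v\in KG$ with $I=\{a\in KG: va=0\}$. Here $\mathbb{F}_pG$ is commutative, so right ideals are ideals. *)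

From HB Require Import structures.
From mathcomp Require Import all_boot all_order all_algebra all_fingroup all_solvable.
Set Implicit Arguments. Unset Strict Implicit. Unset Printing Implicit Defensive.
Import GRing.Theory.
Local Open Scope ring_scope.

(* The group algebra F_p G of a finite group G (given as a finGroupType gT):
   elements are functions G -> F_p, i.e. formal sums \sum_g a(g) g. *)
Notation KG gT p := {ffun gT -> 'F_p}.

Definition gmul (gT : finGroupType) (p : nat) (a b : KG gT p) : KG gT p :=
  [ffun g => \sum_(h : gT) a h * b (h^-1 * g)%g].

Definition gone (gT : finGroupType) (p : nat) : KG gT p :=
  [ffun g => (g == 1%g)%:R].

Definition gsum (gT : finGroupType) (p : nat) : KG gT p := [ffun _ => 1].

Definition jacobson (gT : finGroupType) (p : nat) (a : KG gT p) : Prop :=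
  forall b : KG gT p, exists c : KG gT p,
    gmul (gone gT p - gmul b a) c = gone gT p.

Inductive pow_ideal (gT : finGroupType) (p : nat) (I : KG gT p -> Prop)
  : nat -> KG gT p -> Prop :=
| pow_ideal0 a : pow_ideal I 0 a
| pow_idealM r x y : pow_ideal I r x -> I y -> pow_ideal I r.+1 (gmul x y)
| pow_ideal_zero r : pow_ideal I r.+1 0
| pow_idealD r x y : pow_ideal I r.+1 x -> pow_ideal I r.+1 y ->
                     pow_ideal I r.+1 (x + y).

Definition principal (gT : finGroupType) (p : nat) (I : KG gT p -> Prop) : Prop :=
  exists v : KG gT p, forall a, I a <-> exists b, a = gmul v b.

Definition checkable (gT : finGroupType) (p : nat) (I : KG gT p -> Prop) : Prop :=
  exists v : KG gT p, forall a, I a <-> gmul v a = 0.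

From HB Require Import structures.
From mathcomp Require Import all_boot all_order all_algebra all_fingroup all_solvable.
From mathcomp Require Import zify.
Import GRing.Theory.
Local Open Scope ring_scope.
Set Implicit Arguments. Unset Strict Implicit. Unset Printing Implicit Defensive.

(* Powers of the augmentation ideal J of F_p G, for G elementary abelian of
   order p^m with m >= 2.  Fix coordinates X : G ~ F_p^m and let x_i be the
   generator with coordinates unitv i.  The monomials
   mono e = prod_i (x_i - 1)^(e i), for exponent vectors e in {0..p-1}^m,
   form a basis of F_p G; the dual coordinate functionals are explicit,
   coef e a = sum_g a(g) prod_i binomial(X g i, e i), and satisfy a Leibniz
   rule for the product (Vandermonde's identity mod p).  From this we get:
   coef 0 is the augmentation and J = ker coef 0; J^r contains the
   monomials of degree r and its elements have no coefficients below
   degree r; and J^N, N = m(p-1), is the line of the norm element sum_g g.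
   Non-principality of J^r (0 < r < N) and non-checkability of J^i
   (2 <= i <= N) then come from comparing two distinct monomials of the
   same degree, which exist because m >= 2.
   The development is carried out for abstract coordinates X and the main
   theorem follows by building X from an isomorphism G ~ F_p^m. *)

Lemma prod_if (R : comNzRingType) (I : finType) (P : pred I) (F : I -> R) :
  \prod_i (if P i then F i else 0) = if [forall i, P i] then \prod_i F i else 0.
Proof.
case: forallP => [h|]; first by apply: eq_bigr => i _; rewrite h.
move=> /forallP; rewrite negb_forall => /existsP[i hi].
by rewrite (bigD1 i) //= ifN // mul0r.
Qed.

Lemma prod_bool (R : comNzRingType) (I : finType) (P : pred I) :
  \prod_i ((P i : nat)%:R : R) = ([forall i, P i] : nat)%:R.
Proof.
case: forallP => [h|]; first by rewrite big1 // => i _; rewrite h.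
move=> /forallP; rewrite negb_forall => /existsP[i hi].
by rewrite (bigD1 i) //= (negPf hi) mul0r.
Qed.

Lemma sum_single (R : nmodType) (I : finType) (P : pred I) (F : I -> R) i0 :
  P i0 -> (forall i, P i -> i != i0 -> F i = 0) -> \sum_(i | P i) F i = F i0.
Proof. by move=> h0 h; rewrite (bigD1 i0) //= big1 ?addr0 // => i /andP[]; apply: h. Qed.

Lemma binomial01 n k : (n <= 1)%N -> 'C(n, k) = (k <= n)%N.
Proof. by case: n => [|[|]] // _; case: k => [|[|k]]. Qed.

(* Linearity of the multiplication of F_p G; the group algebra is not
   declared as a ring structure, so these are proved by hand. *)
Section GroupAlgebra.
Variables (gT : finGroupType) (p : nat).
Notation KG := {ffun gT -> 'F_p}.

Definition scale (c : 'F_p) (a : KG) : KG := [ffun g => c * a g].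

Lemma scale0 (a : KG) : scale 0 a = 0.
Proof. by apply/ffunP => g; rewrite !ffunE mul0r. Qed.

Lemma scaleA c d (a : KG) : scale c (scale d a) = scale (c * d) a.
Proof. by apply/ffunP => g; rewrite !ffunE mulrA. Qed.

Lemma gmulDr (a b c : KG) : gmul a (b + c) = gmul a b + gmul a c.
Proof.
by apply/ffunP => g; rewrite !ffunE -big_split; apply: eq_bigr => h _; rewrite ffunE mulrDr.
Qed.

Lemma gmulNr (a b : KG) : gmul a (- b) = - gmul a b.
Proof.
by apply/ffunP => g; rewrite !ffunE -sumrN; apply: eq_bigr => h _; rewrite ffunE mulrN.
Qed.

Lemma gmulBr (a b c : KG) : gmul a (b - c) = gmul a b - gmul a c.
Proof. by rewrite gmulDr gmulNr. Qed.

Lemma gmulZr (a b : KG) (c : 'F_p) : gmul a (scale c b) = scale c (gmul a b).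
Proof.
apply/ffunP => g; rewrite !ffunE mulr_sumr; apply: eq_bigr => h _.
by rewrite ffunE mulrCA.
Qed.

Lemma gmul0l (a : KG) : gmul 0 a = 0.
Proof. by apply/ffunP => g; rewrite !ffunE big1 // => h _; rewrite ffunE mul0r. Qed.

Lemma gmul1l (a : KG) : gmul (gone gT p) a = a.
Proof.
apply/ffunP => g; rewrite ffunE (bigD1 1%g) //= big1 ?addr0.
  by rewrite ffunE eqxx mul1r invg1 mul1g.
by move=> h ne; rewrite ffunE (negPf ne) mul0r.
Qed.

Lemma gmul1r (a : KG) : gmul a (gone gT p) = a.
Proof.
apply/ffunP => g; rewrite ffunE (bigD1 g) //= big1 ?addr0.
  by rewrite ffunE mulVg eqxx mulr1.
move=> h ne; rewrite ffunE; case: eqP => [e|]; last by rewrite mulr0.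
by move: ne; rewrite -(mulKVg h g) e mulg1 eqxx.
Qed.

(* A nonzero power of any ideal is closed under scalars, being an
   additive subgroup of a vector space over a prime field. *)
Lemma pow_ideal_scale (I : KG -> Prop) r (a : KG) c :
  pow_ideal I r.+1 a -> pow_ideal I r.+1 (scale c a).
Proof.
move=> ha; rewrite -(natr_Zp c); elim: (nat_of_ord c) => [|n IH].
  by rewrite scale0; apply: pow_ideal_zero.
have -> : scale n.+1%:R a = scale n%:R a + a.
  by apply/ffunP => g; rewrite !ffunE mulrSr mulrDl mul1r.
exact: pow_idealD.
Qed.

Lemma pow0_checkable (I : KG -> Prop) : checkable (pow_ideal I 0).
Proof. by exists 0 => a; rewrite gmul0l; split => // _; apply: pow_ideal0. Qed.

End GroupAlgebra.

Section PrimeCharacteristic.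
Variable p : nat.
Hypothesis hp : prime p.

Lemma Fp_val_lt (x : 'F_p) : (x < p)%N.
Proof. by have := ltn_ord x; rewrite [X in (_ < X)%N -> _]Fp_cast. Qed.

Lemma Fp_val_nat n : (n < p)%N -> nat_of_ord (n%:R : 'F_p) = n.
Proof. by move=> h; rewrite val_Fp_nat // modn_small. Qed.

Lemma Fp_valD (x y : 'F_p) : nat_of_ord (x + y) = ((x + y) %% p)%N.
Proof. by rewrite -{1}(natr_Zp x) -{1}(natr_Zp y) -natrD val_Fp_nat. Qed.

Lemma Fp_valB (x y : 'F_p) : (y <= x)%N -> nat_of_ord (x - y) = (x - y)%N.
Proof.
move=> le_yx; have := Fp_valD (x - y) y; rewrite subrK => e.
have lt1 := Fp_val_lt (x - y); have lt2 := Fp_val_lt y; have lt3 := Fp_val_lt x.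
case: (ltnP (nat_of_ord (x - y)%R + y)%N p) => h.
  by move: e; rewrite modn_small // => ->; rewrite addnK.
move: e; rewrite -(subnK h) modnDr modn_small; lia.
Qed.

(* 'C(x + y, n) modulo p only depends on x + y modulo p (for n < p):
   this is the one-digit case of Lucas' theorem. *)
Lemma binomial_Fp_valD (x y n : 'F_p) :
  ('C(nat_of_ord (x + y), n))%:R = ('C(x + y, n))%:R :> 'F_p.
Proof.
rewrite Fp_valD; have := Fp_val_lt x; have := Fp_val_lt y; have := Fp_val_lt n.
case: (ltnP (x + y)%N p) => h ln ly lx; first by rewrite modn_small.
set u := ((x + y) %% p)%N.
have ->: (x + y = u + p)%N by rewrite /u -{2}(subnK h) modnDr modn_small; lia.
rewrite -binomial.Vandermonde natr_sum big_ord_recr /= subnn bin0 muln1.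
rewrite big1 ?add0r // => j _; rewrite natrM.
have /(prime_dvd_bin hp) /eqP: (0 < n - j < p)%N by have := ltn_ord j; lia.
by rewrite -(Fp_nat_mod hp ('C(p, _))) => ->; rewrite mulr0.
Qed.

Lemma binomial_FpD (x y n : 'F_p) :
  ('C(nat_of_ord (x + y), n))%:R =
  \sum_(k : 'F_p | (nat_of_ord k <= n)%N) ('C(x, k) * 'C(y, nat_of_ord (n - k)))%:R :> 'F_p.
Proof.
rewrite binomial_Fp_valD -binomial.Vandermonde natr_sum.
have hn : (n.+1 <= (Zp_trunc (pdiv p)).+2)%N.
  by have := Fp_val_lt n; have := Fp_cast hp; lia.
rewrite (big_ord_widen _ (fun j => ('C(x, j) * 'C(y, n - j))%:R) hn).
by apply: eq_big => [k|k hk] //; rewrite Fp_valB.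
Qed.

(* Exponent vectors e in F_p^m, read through their representatives
   0 <= e i < p: they index the monomials prod_i (x_i - 1)^(e i). *)
Section ExponentVectors.
Variable m : nat.
Notation E := {ffun 'I_m -> 'F_p}.

Definition deg (e : E) : nat := (\sum_i nat_of_ord (e i))%N.

Definition lev (u e : E) : bool :=
  [forall i, (nat_of_ord (u i) <= nat_of_ord (e i))%N].

Lemma lev_refl (e : E) : lev e e. Proof. by apply/forallP. Qed.

Lemma lev0e (e : E) : lev 0 e. Proof. by apply/forallP => i; rewrite ffunE. Qed.

Lemma lev_subE (e u : E) i : lev u e -> nat_of_ord ((e - u) i) = (e i - u i)%N.
Proof. by move=> /forallP h; rewrite !ffunE Fp_valB. Qed.

Lemma lev_sub (e u : E) : lev u e -> lev (e - u) e.
Proof. by move=> h; apply/forallP => i; rewrite lev_subE ?leq_subr. Qed.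

Lemma deg_sub (e u : E) : lev u e -> deg e = (deg u + deg (e - u)%R)%N.
Proof.
move=> h; rewrite /deg -big_split /=; apply: eq_bigr => i _.
rewrite lev_subE //; move/forallP: h => /(_ i); lia.
Qed.

Lemma deg0 : deg 0 = 0%N.
Proof. by rewrite /deg big1 // => i _; rewrite ffunE. Qed.

Lemma deg_eq0 (e : E) : deg e = 0%N -> e = 0.
Proof.
move=> /eqP; rewrite /deg sum_nat_eq0 => /forallP h.
by apply/ffunP => i; rewrite ffunE; apply: val_inj => /=; apply/eqP/(h i).
Qed.

Lemma lev_deg_lt (u e : E) : lev u e -> u != e -> (deg u < deg e)%N.
Proof.
move=> h ne; rewrite (deg_sub h); suff : deg (e - u) <> 0%N by lia.
by move/deg_eq0/eqP; rewrite subr_eq0 eq_sym (negPf ne).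
Qed.

Lemma lev_deg_eq (u e : E) : lev u e -> (deg e <= deg u)%N -> u = e.
Proof.
move=> h le_eu; apply/eqP; apply: contraTT le_eu => ne.
by rewrite -ltnNge lev_deg_lt.
Qed.

Lemma lev_e0 (e : E) : lev e 0 = (e == 0).
Proof.
apply/idP/eqP => [h|->]; last exact: lev_refl.
by apply: deg_eq0; move: (deg_sub h); rewrite deg0; lia.
Qed.

Definition unitv (i : 'I_m) : E := [ffun j => (j == i)%:R].

Lemma unitvE i j : nat_of_ord (unitv i j) = (j == i).
Proof. by rewrite ffunE Fp_val_nat //; case: (j == i); rewrite ?prime_gt1 ?prime_gt0. Qed.

Lemma unitv_neq0 i : unitv i != 0.
Proof. by apply/eqP => /ffunP /(_ i) /(congr1 (@nat_of_ord _)); rewrite unitvE eqxx ffunE. Qed.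

Lemma deg_unitv i : deg (unitv i) = 1%N.
Proof.
rewrite /deg (bigD1 i) //= unitvE eqxx big1 // => k hk.
by rewrite unitvE (negPf hk).
Qed.

Lemma lev_unitv (e : E) i : lev e (unitv i) = (e == 0) || (e == unitv i).
Proof.
apply/idP/orP => [h|[/eqP->|/eqP->]]; rewrite ?lev0e ?lev_refl //.
have [->|nz] := eqVneq e 0; [by left | right; apply/eqP/(lev_deg_eq h)].
by rewrite deg_unitv lt0n; apply: contra nz => /eqP /deg_eq0 ->.
Qed.

Lemma unitv_lev (e : E) i : (0 < nat_of_ord (e i))%N -> lev (unitv i) e.
Proof. by move=> h; apply/forallP => k; rewrite unitvE; case: (eqVneq k i) => [->|]. Qed.

Lemma unitvDE (e : E) j k : ((nat_of_ord (e j)).+1 < p)%N ->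
  nat_of_ord ((e + unitv j) k) = (e k + (k == j))%N.
Proof.
move=> h; rewrite ffunE Fp_valD // unitvE modn_small //.
by case: (eqVneq k j) => [->|]; rewrite ?addn1 ?addn0 // => _; apply: Fp_val_lt.
Qed.

Lemma lev_addunitv (e : E) j : ((nat_of_ord (e j)).+1 < p)%N -> lev e (e + unitv j).
Proof. by move=> h; apply/forallP => k; rewrite unitvDE ?leq_addr. Qed.

Lemma deg_addunitv (e : E) j :
  ((nat_of_ord (e j)).+1 < p)%N -> deg (e + unitv j) = (deg e).+1.
Proof. by move=> h; rewrite (deg_sub (lev_addunitv h)) addrC addKr deg_unitv addn1. Qed.

Lemma lev_addunitv2 (e g : E) j : lev e g -> ((nat_of_ord (g j)).+1 < p)%N ->
  lev (e + unitv j) (g + unitv j).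
Proof.
move=> /forallP le_eg hg; have he : ((nat_of_ord (e j)).+1 < p)%N by have := le_eg j; lia.
by apply/forallP => k; rewrite !unitvDE // leq_add2r.
Qed.

Definition topv : E := [ffun _ => (p - 1)%:R].

Lemma topvE j : nat_of_ord (topv j) = (p - 1)%N.
Proof. by rewrite ffunE Fp_val_nat //; have := prime_gt1 hp; lia. Qed.

Lemma lev_top (e : E) : lev e topv.
Proof. by apply/forallP => j; rewrite topvE; have := Fp_val_lt (e j); lia. Qed.

Lemma deg_top : deg topv = (m * (p - 1))%N.
Proof.
rewrite /deg (eq_bigr (fun _ => (p - 1)%N)) ?sum_nat_const ?card_ord //.
by move=> j _; rewrite topvE.
Qed.

Lemma deg_le_top (e : E) : (deg e <= m * (p - 1))%N.
Proof. by rewrite -deg_top (deg_sub (lev_top e)) leq_addr. Qed.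

Lemma deg_lt_top (e : E) : e != topv -> (deg e < m * (p - 1))%N.
Proof. by move=> ne; rewrite -deg_top lev_deg_lt ?lev_top. Qed.

Lemma room_below_top (e : E) :
  (deg e < m * (p - 1))%N -> exists j, ((nat_of_ord (e j)).+1 < p)%N.
Proof.
move=> lt; apply/existsP; apply: contraLR lt; rewrite negb_exists => /forallP h.
rewrite -leqNgt -deg_top; apply: leq_sum => j _; rewrite topvE.
by move: (h j); rewrite -leqNgt; lia.
Qed.

Lemma room_above_zero (e : E) : (0 < deg e)%N -> exists i, (0 < nat_of_ord (e i))%N.
Proof.
move=> lt; apply/existsP; apply: contraLR lt; rewrite negb_exists => /forallP h.
suff -> : e = 0 by rewrite deg0.
apply/ffunP => j; rewrite ffunE; apply: val_inj => /=.
by move: (h j); rewrite lt0n negbK => /eqP.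
Qed.

Lemma deg_surj r : (r <= m * (p - 1))%N -> exists e, deg e = r.
Proof.
elim: r => [|r IH] h; first by exists 0; rewrite deg0.
have [e de] := IH (ltnW h).
have [j hj] : exists j, ((nat_of_ord (e j)).+1 < p)%N by apply: room_below_top; rewrite de.
by exists (e + unitv j); rewrite deg_addunitv // de.
Qed.

Lemma exponent_shift (e : E) i j : i != j ->
  (0 < nat_of_ord (e i))%N -> ((nat_of_ord (e j)).+1 < p)%N ->
  exists2 e', deg e' = deg e & e' != e.
Proof.
move=> ij hi hj; have lu := unitv_lev hi.
have hj' : ((nat_of_ord ((e - unitv i)%R j)).+1 < p)%N.
  by rewrite lev_subE // unitvE eq_sym (negPf ij) subn0.
exists (e - unitv i + unitv j); first by rewrite deg_addunitv // (deg_sub lu) deg_unitv.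
apply/eqP => /ffunP /(_ j) /(congr1 (@nat_of_ord _)).
rewrite unitvDE // lev_subE // unitvE eq_sym (negPf ij) subn0 eqxx addn1.
by move=> h; have := n_Sn (nat_of_ord (e j)); rewrite h.
Qed.

Lemma two_exponents r : (1 < m)%N -> (0 < r < m * (p - 1))%N ->
  exists e1 e2, [/\ deg e1 = r, deg e2 = r & e1 != e2].
Proof.
move=> hm /andP[r0 rN].
have [e de] := deg_surj (ltnW rN).
have [i hi] : exists i, (0 < nat_of_ord (e i))%N by apply: room_above_zero; rewrite de.
have [j hj] : exists j, ((nat_of_ord (e j)).+1 < p)%N by apply: room_below_top; rewrite de.
suff [e' de' ne] : exists2 e', deg e' = deg e & e' != e.
  by exists e, e'; rewrite de' eq_sym.
have [eij|ij] := eqVneq i j; last exact: exponent_shift ij hi hj.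
subst j.
have [k ki] : exists k : 'I_m, k != i.
  have [e0|] := eqVneq (Ordinal (ltnW hm)) i; last by exists (Ordinal (ltnW hm)).
  by exists (Ordinal hm); rewrite -e0.
have [ek|ek] := posnP (nat_of_ord (e k)); last exact: exponent_shift ki ek hj.
by apply: (exponent_shift (i := i) (j := k)); rewrite 1?eq_sym ?ek ?prime_gt1.
Qed.

Section Coordinates.
Variable gT : finGroupType.
Notation KG := {ffun gT -> 'F_p}.
Notation J := (@jacobson gT p).

Variable X : gT -> E.
Hypothesis XM : forall g h, X (g * h)%g = X g + X h.
Hypothesis X_inj : injective X.
Variable Y : E -> gT.
Hypothesis XY : cancel Y X.

Lemma X1 : X 1%g = 0.
Proof. by apply: (addrI (X 1%g)); rewrite -XM mulg1 addr0. Qed.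

(* Writing x_i for the group element of coordinates unitv i, the element
   g = prod_i x_i^(X g i) expands as prod_i (1 + (x_i - 1))^(X g i), so
   that its coefficient on the monomial prod_i (x_i - 1)^(e i) is the
   binomial product below. *)
Definition binom_at (e : E) (g : gT) : 'F_p := \prod_i ('C(X g i, e i))%:R.

(* The coefficient of a in F_p G on the monomial of exponent e. *)
Definition coef (e : E) (a : KG) : 'F_p := \sum_g a g * binom_at e g.

(* Vandermonde's identity in every coordinate. *)
Lemma binom_atM (e : E) (g h : gT) :
  binom_at e (g * h) = \sum_(u : E | lev u e) binom_at u g * binom_at (e - u) h.
Proof.
rewrite /binom_at XM.
under eq_bigr => i _ do rewrite ffunE binomial_FpD // big_mkcond.
rewrite bigA_distr_bigA /= [RHS]big_mkcond /=; apply: eq_bigr => u _.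
rewrite prod_if /lev; case: ifP => // _.
by rewrite -big_split /=; apply: eq_bigr => i _; rewrite !ffunE natrM.
Qed.

Lemma coefM (e : E) (a b : KG) :
  coef e (gmul a b) = \sum_(u : E | lev u e) coef u a * coef (e - u) b.
Proof.
rewrite /coef /gmul.
under eq_bigr => z _ do rewrite ffunE mulr_suml.
rewrite exchange_big /=.
under eq_bigr => h _ do rewrite (reindex_inj (mulgI h)) /=.
under eq_bigr => h _ do under eq_bigr => y _ do rewrite mulKg binom_atM mulr_sumr.
under [RHS]eq_bigr => u _ do rewrite mulr_suml.
rewrite [RHS]exchange_big /=; apply: eq_bigr => h _.
under [RHS]eq_bigr => u _ do rewrite mulr_sumr.
rewrite [RHS]exchange_big /=; apply: eq_bigr => y _.
by apply: eq_bigr => u _; rewrite mulrACA.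
Qed.

Lemma coefD e (a b : KG) : coef e (a + b) = coef e a + coef e b.
Proof. by rewrite /coef -big_split; apply: eq_bigr => g _; rewrite ffunE mulrDl. Qed.

Lemma coefN e (a : KG) : coef e (- a) = - coef e a.
Proof. by rewrite /coef -sumrN; apply: eq_bigr => g _; rewrite ffunE mulNr. Qed.

Lemma coefB e (a b : KG) : coef e (a - b) = coef e a - coef e b.
Proof. by rewrite coefD coefN. Qed.

Lemma coefZ e (c : 'F_p) (a : KG) : coef e (scale c a) = c * coef e a.
Proof. by rewrite /coef mulr_sumr; apply: eq_bigr => g _; rewrite ffunE mulrA. Qed.

Lemma coef0 e : coef e (0 : KG) = 0.
Proof. by rewrite /coef big1 // => g _; rewrite ffunE mul0r. Qed.

Lemma coef_elt e h : coef e [ffun g => (g == h)%:R] = binom_at e h.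
Proof.
rewrite /coef (bigD1 h) //= big1 ?addr0; first by rewrite ffunE eqxx mul1r.
by move=> g ne; rewrite ffunE (negPf ne) mul0r.
Qed.

Lemma binom_at0 g : binom_at 0 g = 1.
Proof. by rewrite /binom_at big1 // => i _; rewrite ffunE bin0. Qed.

Lemma binom_at_self g : binom_at (X g) g = 1.
Proof. by rewrite /binom_at big1 // => i _; rewrite binn. Qed.

Lemma binom_at_lev (e : E) h : binom_at e h != 0 -> lev e (X h).
Proof.
apply: contraR; rewrite /lev negb_forall => /existsP[i]; rewrite -ltnNge => lt.
by rewrite /binom_at (bigD1 i) //= bin_small // mul0r.
Qed.

Lemma binom_at01 (e : E) g : (forall j, nat_of_ord (X g j) <= 1)%N ->
  binom_at e g = (lev e (X g))%:R.
Proof.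
move=> h01; rewrite /binom_at -prod_bool.
by apply: eq_bigr => j _; rewrite binomial01.
Qed.

(* The monomials form a basis: an element with no nonzero coefficient is
   zero.  Induction on the degree of X g, via the unitriangularity
   binom_at (X g) h <> 0 -> X g <= X h. *)
Lemma coef_inj (a : KG) : (forall e, coef e a = 0) -> a = 0.
Proof.
move=> ha; apply/ffunP => g; rewrite ffunE.
suff vanish : forall n g, (m * (p - 1) < deg (X g) + n)%N -> a g = 0.
  by apply: (vanish (m * (p - 1)).+1); lia.
elim=> [|n IH] {}g hg; first by have := deg_le_top (X g); lia.
have := ha (X g); rewrite /coef (bigD1 g) //= binom_at_self mulr1 big1 ?addr0 //.
move=> h hne; have [->|nz] := eqVneq (binom_at (X g) h) 0; first by rewrite mulr0.
have ne : X g != X h by rewrite (inj_eq X_inj) eq_sym.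
have lt := lev_deg_lt (binom_at_lev nz) ne.
by rewrite IH ?mul0r //; lia.
Qed.

Lemma coefM_shift (u e : E) (a b : KG) : (forall e', coef e' b = (e' == u)%:R) ->
  coef e (gmul a b) = if lev u e then coef (e - u) a else 0.
Proof.
move=> hb; rewrite coefM; case: ifP => hu.
  rewrite (@sum_single _ _ _ _ (e - u)) ?lev_sub //; first by rewrite hb subKr eqxx mulr1.
  move=> w hw ne; rewrite hb; case: eqP => [ew|]; last by rewrite mulr0.
  by move: ne; rewrite -ew subKr eqxx.
rewrite big1 // => w hw; rewrite hb; case: eqP => [ew|]; last by rewrite mulr0.
by move: hu; rewrite -ew lev_sub.
Qed.

Lemma coefM_lowl (e : E) (v b : KG) :
  (forall e', (deg e' < deg e)%N -> coef e' v = 0) ->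
  coef e (gmul v b) = coef e v * coef 0 b.
Proof.
move=> hv; rewrite coefM (@sum_single _ _ _ _ e) ?lev_refl ?subrr // => u hu ne.
by rewrite hv ?mul0r // lev_deg_lt.
Qed.

Lemma coefM_lowr (e : E) (u c : KG) :
  (forall e', (deg e' < deg e)%N -> coef e' c = 0) ->
  coef e (gmul u c) = coef 0 u * coef e c.
Proof.
move=> hc; rewrite coefM (@sum_single _ _ _ _ (0 : E)) ?lev0e ?subr0 // => w hw ne.
rewrite hc ?mulr0 // [X in (_ < X)%N](deg_sub hw).
suff : deg w <> 0%N by lia.
by move/deg_eq0/eqP; rewrite (negPf ne).
Qed.

Lemma augM (a b : KG) : coef 0 (gmul a b) = coef 0 a * coef 0 b.
Proof. by apply: coefM_lowl => e'; rewrite deg0. Qed.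

Lemma coef_one e : coef e (gone gT p) = (e == 0)%:R.
Proof.
by rewrite coef_elt binom_at01 X1 ?lev_e0 // => j; rewrite ffunE.
Qed.

Lemma lowest_coef (a : KG) : a != 0 ->
  exists2 e, coef e a != 0 & forall e', (deg e' < deg e)%N -> coef e' a = 0.
Proof.
move=> nz.
have ex_deg : exists n, [exists e, (deg e == n) && (coef e a != 0)].
  have [e he] : exists e, coef e a != 0.
    apply/existsP; apply: contraR nz; rewrite negb_exists => /forallP h.
    by apply/eqP/coef_inj => e; apply/eqP/negPn/h.
  by exists (deg e); apply/existsP; exists e; rewrite eqxx.
case: (ex_minnP ex_deg) => n /existsP[e /andP[/eqP de nze]] min_n.
exists e => // e' lt; apply/eqP; apply: contraTT lt => nz'.
by rewrite -leqNgt de; apply: min_n; apply/existsP; exists e'; rewrite eqxx.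
Qed.

(* Elements with nonzero augmentation are units: multiplication by them is
   injective (look at a lowest coefficient), hence bijective. *)
Lemma aug_unit (u : KG) : coef 0 u != 0 -> exists c, gmul u c = gone gT p.
Proof.
move=> hu.
have inj : injective (gmul u).
  move=> c1 c2 eq_uc; apply/eqP; rewrite -subr_eq0; apply/negPn/negP => nz.
  have [e he low] := lowest_coef nz.
  have := coefM_lowr u low; rewrite gmulBr eq_uc subrr coef0 => /esym/eqP.
  by rewrite mulf_eq0 (negPf hu) (negPf he).
have [g _ gK] := injF_bij inj.
by exists (g (gone gT p)); rewrite gK.
Qed.

Lemma jacobsonE (a : KG) : jacobson a <-> coef 0 a = 0.
Proof.
split => [hj | ha b].
  apply/eqP; apply/negPn/negP => nz.
  have [c /(congr1 (coef 0))] := hj (scale (coef 0 a)^-1 (gone gT p)).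
  rewrite augM coefB augM coefZ coef_one eqxx mulr1 mulVf // subrr mul0r => /eqP.
  by rewrite eq_sym oner_eq0.
by apply: aug_unit; rewrite coefB augM ha mulr0 subr0 coef_one eqxx oner_neq0.
Qed.

Lemma gsumM (b : KG) : gmul (gsum gT p) b = scale (coef 0 b) (gsum gT p).
Proof.
apply/ffunP => g; rewrite !ffunE mulr1 /coef.
have inj : injective (fun y : gT => (y^-1 * g)%g) by move=> y1 y2 /mulIg /invg_inj.
rewrite [RHS](reindex_inj inj) /=; apply: eq_bigr => h _.
by rewrite !ffunE mul1r binom_at0 mulr1.
Qed.

Definition gen (i : 'I_m) : gT := Y (unitv i).
Definition xvar (i : 'I_m) : KG := [ffun g => (g == gen i)%:R] - gone gT p.

Lemma coef_xvar e i : coef e (xvar i) = (e == unitv i)%:R.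
Proof.
rewrite coefB coef_elt coef_one binom_at01 /gen XY ?lev_unitv //; last first.
  by move=> j; rewrite unitvE //; case: (j == i).
have [->|] := eqVneq e 0; last by rewrite subr0.
by rewrite eq_sym (negPf (unitv_neq0 i)) subrr.
Qed.

Lemma xvar_jacobson i : jacobson (xvar i).
Proof. by apply/jacobsonE; rewrite coef_xvar eq_sym (negPf (unitv_neq0 i)). Qed.

Definition monomial (s : seq 'I_m) : KG :=
  foldr (fun i a => gmul a (xvar i)) (gone gT p) s.

Definition multiplicity (s : seq 'I_m) : E := [ffun j => (count_mem j s)%:R].

Lemma coef_monomial s : (forall j, count_mem j s < p)%N ->
  forall e, coef e (monomial s) = (e == multiplicity s)%:R.
Proof.
elim: s => [|i s IH] hs e.
  by rewrite /= coef_one; congr ((_ : bool)%:R); congr (e == _); apply/ffunP => j; rewrite !ffunE.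
have hs' j : (count_mem j s < p)%N by have := hs j; rewrite /=; lia.
have multS : multiplicity (i :: s) = multiplicity s + unitv i.
  by apply/ffunP => j; rewrite !ffunE /= natrD addrC eq_sym.
rewrite /= (coefM_shift _ _ (coef_xvar^~ i)) multS; case: ifP => hu.
  by rewrite IH // subr_eq.
case: eqP => // ee; move: hu; rewrite ee -multS unitv_lev //.
by rewrite ffunE (Fp_val_nat (hs i)) /= eqxx.
Qed.

Lemma monomial_pow s : pow_ideal J (size s) (monomial s).
Proof.
elim: s => [|i s IH] /=; first exact: pow_ideal0.
by apply: pow_idealM => //; apply: xvar_jacobson.
Qed.

Definition vars (e : E) : seq 'I_m :=
  flatten [seq nseq (nat_of_ord (e j)) j | j <- enum 'I_m].

Lemma count_vars e j : count_mem j (vars e) = nat_of_ord (e j).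
Proof.
rewrite /vars count_flatten -map_comp sumnE big_map big_enum /=.
rewrite (bigD1 j) //= big1 ?addn0; first by rewrite count_nseq /= eqxx mul1n.
by move=> k hk; rewrite count_nseq /= (negPf hk).
Qed.

Lemma size_vars e : size (vars e) = deg e.
Proof.
rewrite /vars size_flatten /shape -map_comp sumnE big_map big_enum /=.
by apply: eq_bigr => k _; rewrite /= size_nseq.
Qed.

Definition mono (e : E) : KG := monomial (vars e).

Lemma coef_mono e f : coef f (mono e) = (f == e)%:R.
Proof.
rewrite coef_monomial => [|j]; last by rewrite count_vars Fp_val_lt.
by congr ((_ : bool)%:R); congr (f == _); apply/ffunP => j; rewrite ffunE count_vars natr_Zp.
Qed.

Lemma mono_pow e : pow_ideal J (deg e) (mono e).
Proof. by rewrite -size_vars; apply: monomial_pow. Qed.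

Lemma pow_ideal_coef r (a : KG) : pow_ideal J r a ->
  forall e, (deg e < r)%N -> coef e a = 0.
Proof.
elim=> {r a} [a|r x y _ IH /jacobsonE hy|r|r x y _ IHx _ IHy] e he //.
- rewrite coefM big1 // => u hu.
  have [lt|le_ru] := ltnP (deg u) r; first by rewrite IH ?mul0r.
  have de : deg e = (deg u + deg (e - u)%R)%N := deg_sub hu.
  have /deg_eq0 -> : deg (e - u) = 0%N by lia.
  by rewrite hy mulr0.
- exact: coef0.
- by rewrite coefD IHx ?IHy ?addr0.
Qed.

Lemma pow1E (a : KG) : pow_ideal J 1 a <-> jacobson a.
Proof.
split => [aJ|aJ]; first by apply/jacobsonE/(pow_ideal_coef aJ); rewrite deg0.
by rewrite -(gmul1l a); apply: pow_idealM => //; apply: pow_ideal0.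
Qed.

Lemma pow1_checkable : checkable (pow_ideal J 1).
Proof.
exists (gsum gT p) => a; rewrite pow1E jacobsonE gsumM.
split => [->|/(congr1 (fun b : KG => b 1%g))]; first by rewrite scale0.
by rewrite !ffunE mulr1.
Qed.

Section PowersOfJ.
Hypothesis hm : (1 < m)%N.
Notation N := (m * (p - 1))%N.

Lemma N_gt0 : (0 < N)%N.
Proof. by rewrite muln_gt0 subn_gt0 prime_gt1 // andbT; apply: ltnW. Qed.

(* For 0 < r < N, J^r is not principal: a generator v would have no
   coefficient below degree r, so on degree r the coefficients of v b are
   those of v scaled by the augmentation of b; two distinct monomials of
   degree r cannot both be of this form. *)
Lemma pow_not_principal r : (0 < r < N)%N -> ~ principal (pow_ideal J r).
Proof.
move=> hr [v hv].
have vJ : pow_ideal J r v by apply/hv; exists (gone gT p); rewrite gmul1r.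
have low e : deg e = r -> forall b, coef e (gmul v b) = coef e v * coef 0 b.
  move=> de b; apply: coefM_lowl => e'; rewrite de => lt; exact: (pow_ideal_coef vJ lt).
have [e1 [e2 [de1 de2 ne]]] := two_exponents hm hr.
have [b1 hb1] : exists b, mono e1 = gmul v b by apply/hv; rewrite -de1; apply: mono_pow.
have [b2 hb2] : exists b, mono e2 = gmul v b by apply/hv; rewrite -de2; apply: mono_pow.
have := congr1 (coef e1) hb1; rewrite coef_mono eqxx low // => c11.
have := congr1 (coef e2) hb1; rewrite coef_mono eq_sym (negPf ne) low // => c21.
have := congr1 (coef e2) hb2; rewrite coef_mono eqxx low // => c22.
have aug1 : coef 0 b1 != 0 by apply: contra_eq_neq c11 => ->; rewrite mulr0 oner_neq0.
have : coef e2 v = 0 by apply/eqP; move/esym/eqP: c21; rewrite mulf_eq0 (negPf aug1) orbF.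
by move: c22 => /[swap] ->; rewrite mul0r => /eqP; rewrite oner_eq0.
Qed.

Lemma top_supported (a : KG) : (forall f, f != topv -> coef f a = 0) ->
  a = scale (coef topv a) (mono topv).
Proof.
move=> ha; apply/eqP; rewrite -subr_eq0; apply/eqP/coef_inj => // f.
rewrite coefB coefZ coef_mono; have [->|ne] := eqVneq f topv; first by rewrite mulr1 subrr.
by rewrite ha // mulr0 subrr.
Qed.

(* The norm element is killed by every x_i - 1, hence supported on the top
   exponent. *)
Lemma coef_gsum f : f != topv -> coef f (gsum gT p) = 0.
Proof.
move=> ne; have [j hj] := room_below_top (deg_lt_top ne).
have : gmul (gsum gT p) (xvar j) = 0.
  by rewrite gsumM coef_xvar // eq_sym (negPf (unitv_neq0 j)); apply/ffunP => g; rewrite !ffunE mul0r.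
move=> /(congr1 (coef (f + unitv j))).
by rewrite (coefM_shift _ _ (coef_xvar^~ j)) coef0 addrK unitv_lev // unitvDE // eqxx addn1.
Qed.

Lemma gsum_top : gsum gT p = scale (coef topv (gsum gT p)) (mono topv).
Proof. exact: top_supported coef_gsum. Qed.

Lemma coef_top_gsum : coef topv (gsum gT p) != 0.
Proof.
apply/eqP => z; have := congr1 (fun a : KG => a 1%g) gsum_top.
by rewrite /= !ffunE z mul0r => /eqP; rewrite oner_eq0.
Qed.

Lemma top_power (a : KG) :
  pow_ideal J N a <-> exists c : 'F_p, a = [ffun g => c * gsum gT p g].
Proof.
split => [aJ|[c ->]].
  set s0 := coef topv (gsum gT p).
  exists (coef topv a / s0); rewrite -[RHS]/(scale _ _) gsum_top -/s0 scaleA.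
  rewrite divfK ?coef_top_gsum //; apply: top_supported => f ne.
  by apply: (pow_ideal_coef aJ); apply: deg_lt_top.
rewrite -[X in pow_ideal _ _ X]/(scale c (gsum gT p)) gsum_top -(prednK N_gt0).
by apply/pow_ideal_scale/pow_ideal_scale; rewrite prednK ?N_gt0 // -deg_top; apply: mono_pow.
Qed.

Lemma top_principal : principal (pow_ideal J N).
Proof.
exists (gsum gT p) => a; rewrite top_power; split => [[c ->]|[b ->]].
  by exists (scale c (gone gT p)); rewrite gsumM coefZ coef_one eqxx mulr1.
by exists (coef 0 b); rewrite gsumM.
Qed.

Section Annihilator.
Variables (i : nat) (v : KG).
Hypothesis hi : (2 <= i <= N)%N.
Hypothesis ann_v : forall a, pow_ideal J i a <-> gmul v a = 0.

(* v kills the monomials of degree i, so its coefficients vanish at every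
   exponent g - e with deg e = i and e <= g. *)
Lemma ann_coef e g : deg e = i -> lev e g -> coef (g - e) v = 0.
Proof.
move=> de le_eg; have : gmul v (mono e) = 0 by apply/ann_v; rewrite -de; apply: mono_pow.
by move=> /(congr1 (coef g)); rewrite (coefM_shift _ _ (coef_mono e)) le_eg coef0.
Qed.

(* Hence v maps the monomials of degree i - 1 into the top line: any
   exponent g below the top can be raised to g + unitv j, and e to
   e + unitv j of degree i. *)
Lemma ann_mono_top e : deg e = i.-1 -> forall g, g != topv -> coef g (gmul v (mono e)) = 0.
Proof.
move=> de g ne; rewrite (coefM_shift _ _ (coef_mono e)); case: ifP => // le_eg.
have [j hj] := room_below_top (deg_lt_top ne).
have hej : ((nat_of_ord (e j)).+1 < p)%N by move/forallP: le_eg => /(_ j); lia.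
have -> : g - e = (g + unitv j) - (e + unitv j) by rewrite opprD addrACA subrr addr0.
by apply: ann_coef; rewrite ?lev_addunitv2 // deg_addunitv // de; lia.
Qed.

(* ... and onto a nonzero multiple of the top monomial, since monomials of
   degree i - 1 are not in J^i. *)
Lemma ann_mono_neq0 e : deg e = i.-1 -> coef topv (gmul v (mono e)) != 0.
Proof.
move=> de; apply/eqP => z.
have : gmul v (mono e) = 0 by rewrite (top_supported (ann_mono_top de)) z scale0.
have lt : (i.-1 < i)%N by lia.
move=> /ann_v /pow_ideal_coef /(_ e); rewrite coef_mono eqxx de.
by move=> /(_ lt) /eqP; rewrite oner_eq0.
Qed.

End Annihilator.

(* For 2 <= i <= N, J^i is not checkable: with e1 <> e2 of degree i - 1
   and v (mono e_k) = l_k mono topv, the element l2 mono e1 - l1 mono e2 is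
   killed by v but has a nonzero coefficient in degree i - 1 < i. *)
Lemma pow_not_checkable i : (2 <= i <= N)%N -> ~ checkable (pow_ideal J i).
Proof.
move=> hi [v ann_v].
have [e1 [e2 [de1 de2 ne]]] : exists e1 e2, [/\ deg e1 = i.-1, deg e2 = i.-1 & e1 != e2].
  by apply: two_exponents => //; lia.
have top1 := top_supported (ann_mono_top hi ann_v de1).
have top2 := top_supported (ann_mono_top hi ann_v de2).
set l1 := coef topv (gmul v (mono e1)) in top1.
set l2 := coef topv (gmul v (mono e2)) in top2.
have : gmul v (scale l2 (mono e1) - scale l1 (mono e2)) = 0.
  by rewrite gmulBr !gmulZr top1 top2 !scaleA mulrC subrr.
move=> /ann_v /pow_ideal_coef /(_ e2); rewrite coefB !coefZ !coef_mono eq_sym (negPf ne).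
have lt : (i.-1 < i)%N by lia.
rewrite eqxx mulr0 mulr1 sub0r de2 => /(_ lt) /eqP; rewrite oppr_eq0.
by rewrite (negPf (ann_mono_neq0 hi ann_v de1)).
Qed.

Lemma powers_of_J :
  (forall r, (0 < r < N)%N -> ~ principal (pow_ideal J r)) /\
  (forall a, pow_ideal J N a <-> exists c : 'F_p, a = [ffun g => c * gsum gT p g]) /\
  principal (pow_ideal J N) /\
  (forall i, (i <= N)%N -> (checkable (pow_ideal J i) <-> (i == 0)%N || (i == 1)%N)).
Proof.
split; first exact: pow_not_principal.
split; first exact: top_power.
split; first exact: top_principal.
case=> [|[|i]] hi /=.
- by split => // _; apply: pow0_checkable.
- by split => // _; apply: pow1_checkable.
- by split => // /(@pow_not_checkable i.+2 hi).
Qed.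

End PowersOfJ.

End Coordinates.
End ExponentVectors.
End PrimeCharacteristic.

Lemma abelem_coordinates (p m : nat) (gT : finGroupType) :
  prime p -> (p.-abelem [set: gT])%g -> #|gT| = (p ^ m)%N ->
  exists (X : gT -> {ffun 'I_m -> 'F_p}) (Y : {ffun 'I_m -> 'F_p} -> gT),
    [/\ forall g h, X (g * h)%g = X g + X h, injective X & cancel Y X].
Proof.
move=> hp habelem hcard.
have : ([set: gT] \isog [set: 'rV['F_p]_m])%g.
  rewrite (isog_abelem_card _ habelem) fin_Fp_lmod_abelem //= !cardsT card_mx mul1n.
  by rewrite card_Fp // hcard.
case/isogP=> f injf imf.
pose X (g : gT) : {ffun 'I_m -> 'F_p} := [ffun i => f g 0 i].
have X_inj : injective X.
  move=> g h /ffunP eqX; apply: (injmP injf); rewrite ?inE //.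
  by apply/rowP => i; have := eqX i; rewrite !ffunE.
exists X, (fun e => odflt 1%g [pick g | X g == e]); split => //.
  by move=> g h; apply/ffunP => i; rewrite !ffunE morphM ?inE // mxE.
move=> e; case: pickP => [g /eqP //|none].
have : \row_i e i \in (f @* [set: gT])%g by rewrite imf inE.
case/morphimP => g _ _ eg; have := none g.
suff -> : X g = e by rewrite eqxx.
by apply/ffunP => i; rewrite ffunE -eg mxE.
Qed.

Theorem mainTheorem4 (p m : nat) (gT : finGroupType)
  (hp : prime p) (hm : (2 <= m)%N)
  (habelem : (p.-abelem [set: gT])%g) (hcard : #|gT| = (p ^ m)%N) :
  let J := @jacobson gT p in
  let N := (m * (p - 1))%N in
  (forall r : nat, (0 < r < N)%N -> ~ principal (pow_ideal J r)) /\
  (forall a, pow_ideal J N a <-> exists c : 'F_p, a = [ffun g => c * gsum gT p g]) /\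
  principal (pow_ideal J N) /\
  (forall i : nat, (i <= N)%N ->
     (checkable (pow_ideal J i) <-> (i == 0)%N || (i == 1)%N)).
Proof.
have [X [Y [XM X_inj XY]]] := abelem_coordinates hp habelem hcard.
exact: (powers_of_J hp XM X_inj XY hm).
Qed.
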